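(* For any loxodromic element $r\in\mathrm{Spin}(1,n)$ we have \[\ell(r)\ \geq\ 2\cosh^{-1}(|r_{\mathbb{R}}|).\]
   Context: Let $\tilde Q=y_0^2-y_1^2-\cdots-y_n^2$ on $E=\mathbb{R}^{n+1}$ with orthogonal basis $e_0,\dots,e_n$. The Clifford algebra $\mathscr{C}(\tilde Q,\mathbb{R})$ is the tensor algebra of $E$ modulo the relations $x\otimes y+y\otimes x=2\Phi(x,y)$ ($\Phi$ the bilinear form of $\tilde Q$); it has basis $e_M=e_{\mu_1}\cdots e_{\mu_\nu}$ for subsets $M=\{\mu_1<\dots<\mu_\nu\}$ (with $e_\emptyset=1$), and every $s$ is uniquely $s=s_{\mathbb{R}}\cdot 1+\sum_{M\neq\emptyset}s_Me_M$; $s_{\mathbb{R}}$ is the real part of $s$. The anti-involution $*$ is defined by $e_M^*=(-1)^{\nu(\nu-1)/2}e_M$, $\nu=|M|$. The even subalgebra $\mathscr{C}^+$ is spanned by $e_M$ with $|M|$ even, and $\mathrm{Spin}(1,n)=\{s\in\mathscr{C}^+ : sEs^*\subseteq E,\ ss^*=1\}$. Each $s\in \mathrm{Spin}(1,n)$ acts on hyperbolic $n$-space (the sheet with $y_0>0$ of $\{\tilde Q=1\}$, with the induced metric from $-\tilde Q$) by the orientation-preserving isometry $\varphi_s(x)=sxs^*$; $s$ is called loxodromic if $\varphi_s$ fixes exactly two points on the boundary at infinity, and $\ell(s)=\inf_x d(x,\varphi_s(x))$ is its translation length. *)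

From HB Require Import structures.
From mathcomp Require Import all_boot all_order all_algebra.
From mathcomp Require Import all_classical all_reals exp.
Set Implicit Arguments. Unset Strict Implicit. Unset Printing Implicit Defensive.
Import Order.TTheory GRing.Theory Num.Theory.
Local Open Scope ring_scope.


Definition acosh (R : realType) (x : R) : R := ln (x + Num.sqrt (x ^+ 2 - 1)).

(* The Clifford algebra C(Q~, R) of Q~ = y0^2 - y1^2 - ... - yn^2 on R^(n+1),
   represented in the basis e_M, M a subset of {0,..,n}:
   s = sum_M (s M) e_M. *)
Notation cl R n := {ffun {set 'I_n.+1} -> R}.

Definition qdiag (R : realType) (n : nat) (i : 'I_n.+1) : R :=
  if val i == 0%N then 1 else -1.

(* e_M e_N = (-1)^{#{(i,j) : i in M, j in N, j < i}} (prod_{i in M cap N} Q(e_i)) e_{M Delta N},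
   which is the product in the quotient of the tensor algebra by
   x (x) y + y (x) x = 2 Phi(x,y) for the orthogonal basis e_0..e_n. *)
Definition blade_sign (R : realType) (n : nat) (M N : {set 'I_n.+1}) : R :=
  (-1) ^+ #|[set p : 'I_n.+1 * 'I_n.+1 | (p.1 \in M) && (p.2 \in N) && (val p.2 < val p.1)%N]|
  * \prod_(i in M :&: N) qdiag R i.

Definition symdiff (n : nat) (M N : {set 'I_n.+1}) : {set 'I_n.+1} :=
  (M :\: N) :|: (N :\: M).

Definition clmul (R : realType) (n : nat) (s t : cl R n) : cl R n :=
  [ffun K => \sum_(M : {set 'I_n.+1}) \sum_(N : {set 'I_n.+1} | symdiff M N == K)
               s M * t N * blade_sign R M N].

Definition clone (R : realType) (n : nat) : cl R n :=
  [ffun K => if K == finset.set0 then 1 else 0].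

Definition realpart (R : realType) (n : nat) (s : cl R n) : R := s finset.set0.

Definition clstar (R : realType) (n : nat) (s : cl R n) : cl R n :=
  [ffun M : {set 'I_n.+1} => (-1) ^+ ((#|M| * (#|M|).-1) %/ 2) * s M].

Definition is_even (R : realType) (n : nat) (s : cl R n) : Prop :=
  forall M : {set 'I_n.+1}, odd #|M| -> s M = 0.

Definition is_vec (R : realType) (n : nat) (s : cl R n) : Prop :=
  forall M : {set 'I_n.+1}, #|M| != 1%N -> s M = 0.

Definition Phi (R : realType) (n : nat) (x y : cl R n) : R :=
  \sum_(i : 'I_n.+1) qdiag R i * x [set i] * y [set i].

Definition is_spin (R : realType) (n : nat) (s : cl R n) : Prop :=
  [/\ is_even s,
      (forall x : cl R n, is_vec x -> is_vec (clmul (clmul s x) (clstar s))) &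
      clmul s (clstar s) = clone R n].

Definition phi_s (R : realType) (n : nat) (s x : cl R n) : cl R n :=
  clmul (clmul s x) (clstar s).

Definition hyp (R : realType) (n : nat) : set (cl R n) :=
  [set x | is_vec x /\ Phi x x = 1 /\ 0 < x [set ord0]%SET]%classic.

(* Riemannian distance for the metric induced by -Q~:
   cosh d(x,y) = Phi(x,y). *)
Definition hdist (R : realType) (n : nat) (x y : cl R n) : R := acosh (Phi x y).

(* boundary at infinity: future null rays {c v : c > 0}, Q~(v) = 0, v_0 > 0 *)
Definition future_null (R : realType) (n : nat) (v : cl R n) : Prop :=
  is_vec v /\ Phi v v = 0 /\ 0 < v [set ord0].

Definition same_ray (R : realType) (n : nat) (u v : cl R n) : Prop :=
  exists2 c : R, 0 < c & forall M : {set 'I_n.+1}, u M = c * v M.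

Definition fixes_bdry (R : realType) (n : nat) (s v : cl R n) : Prop :=
  same_ray (phi_s s v) v.

Definition loxodromic (R : realType) (n : nat) (s : cl R n) : Prop :=
  exists v w : cl R n,
    [/\ future_null v /\ future_null w, ~ same_ray v w,
        fixes_bdry s v, fixes_bdry s w &
        forall u, future_null u -> fixes_bdry s u -> same_ray u v \/ same_ray u w].

Definition transl_length (R : realType) (n : nat) (s : cl R n) : R :=
  inf [set hdist x (phi_s s x) | x in @hyp R n]%classic.

From HB Require Import structures.
From mathcomp Require Import all_boot all_order all_algebra.
From mathcomp Require Import all_classical all_reals exp.
From mathcomp Require Import ring lra zify.

(* Since [cosh d(x, phi_r x) = Q~(x, r x r^* )], it suffices to show
   [Q~(x, r x r^* ) >= 2 r_R^2 - 1] for every point [x] of hyperbolic space.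
   Writing [x = g e0 g^* / c] with [g = 1 + x e0], the element [t = g^* r g]
   satisfies [c^2 Q~(x, r x r^* ) = Re(e0 t e0 t^* ) = sum_M t_M^2],
   [Re(t t^* ) = sum_M (+-1) t_M^2 = c^2] and [t_R = c r_R]; comparing the two
   sums on their real-part term gives [c^2 Q~(x, r x r^* ) + c^2 >= 2 c^2 r_R^2].
   Then [2 acosh |r_R| = acosh (2 r_R^2 - 1)] and monotonicity of [acosh]
   conclude. *)

Set Implicit Arguments.
Unset Strict Implicit.
Unset Printing Implicit Defensive.
Import Order.TTheory GRing.Theory Num.Theory.

Lemma card_decreasing_pairs (k : nat) (A : {set 'I_k}) :
  #|[set p : 'I_k * 'I_k | (p.1 \in A) && (p.2 \in A) && (val p.2 < val p.1)%N]|
  = (#|A| * (#|A|).-1) %/ 2.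
Proof.
pose inA2 (i j : 'I_k) (b : bool) : nat := (i \in A) && (j \in A) && b.
set X := #|_|.
have X_sum : X = (\sum_i \sum_j inA2 i j (val j < val i)%N)%N.
  rewrite /X -sum1_card big_mkcond pair_bigA /=.
  by apply: eq_bigr => -[i j] _; rewrite inE /inA2; case: (_ && _).
have X_swap : X = (\sum_i \sum_j inA2 i j (val i < val j)%N)%N.
  rewrite X_sum exchange_big; apply: eq_bigr => i _; apply: eq_bigr => j _.
  by rewrite /inA2; case: (i \in A); case: (j \in A).
have diag : (\sum_i \sum_j inA2 i j (i == j))%N = #|A|.
  rewrite -sum1_card [RHS]big_mkcond /=; apply: eq_bigr => i _.
  rewrite (bigD1 i) //= big1 => [|j /negbTE ji]; last by rewrite /inA2 eq_sym ji andbF.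
  by rewrite /inA2 eqxx andbb andbT addn0; case: (i \in A).
have square : (X + X + #|A| = #|A| * #|A|)%N.
  have cardA : #|A| = (\sum_i (i \in A : nat))%N by rewrite -sum1_card big_mkcond.
  rewrite {1}X_sum {1}X_swap -{1}diag cardA big_distrl -!big_split.
  apply: eq_bigr => i _ /=; rewrite big_distrr -!big_split; apply: eq_bigr => j _ /=.
  rewrite /inA2 -(inj_eq val_inj); case: (i \in A); case: (j \in A) => //=.
  by case: ltngtP.
by rewrite (_ : _ * _ = X * 2)%N ?mulnK //; nia.
Qed.

Local Open Scope ring_scope.

Section Acosh.
Variable R : realType.

Lemma acosh_ge0 (x : R) : 1 <= x -> 0 <= acosh x.
Proof. by move=> x1; apply: ln_ge0; have := sqrtr_ge0 (x ^+ 2 - 1); lra. Qed.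

(* For [x < 1], [Num.sqrt] of the negative [x ^+ 2 - 1] is [0], so [acosh x = ln x]. *)
Lemma acosh_le0 (x : R) : x <= 1 -> 0 <= x -> acosh x <= 0.
Proof.
move=> x1 x0; rewrite /acosh ler0_sqrtr ?addr0 ?ln_le0 //.
by rewrite subr_le0 expr_le1.
Qed.

Lemma ler_acosh (x y : R) : 1 <= x -> x <= y -> acosh x <= acosh y.
Proof.
move=> x1 xy; have sx := sqrtr_ge0 (x ^+ 2 - 1).
rewrite /acosh ler_ln ?posrE; [|lra|have := sqrtr_ge0 (y ^+ 2 - 1); lra].
by apply: lerD => //; apply: ler_wsqrtr; nra.
Qed.

Lemma acosh_double (x : R) : 1 <= x -> 2 * acosh x = acosh (2 * x ^+ 2 - 1).
Proof.
move=> x1; rewrite /acosh; set w := Num.sqrt (x ^+ 2 - 1).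
have w0 : 0 <= w := sqrtr_ge0 _.
have ww : w ^+ 2 = x ^+ 2 - 1 by rewrite sqr_sqrtr // subr_ge0 expr_ge1 //; lra.
have -> : Num.sqrt ((2 * x ^+ 2 - 1) ^+ 2 - 1) = 2 * x * w.
  rewrite -[RHS]ger0_norm -?sqrtr_sqr; last by apply: mulr_ge0 => //; lra.
  by congr Num.sqrt; rewrite exprMn ww; ring.
rewrite -[2]/(1 *+ 2) mulr_natl -lnXn; last lra.
by congr ln; rewrite sqrrD ww; ring.
Qed.

Lemma acosh_double_le (a P : R) : 1 <= P -> 2 * a ^+ 2 - 1 <= P ->
  2 * acosh `|a| <= acosh P.
Proof.
move=> P1 Pa; have acoshP : 0 <= acosh P by apply: acosh_ge0.
have [a1|a1] := lerP `|a| 1; first by have := acosh_le0 a1 (normr_ge0 a); lra.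
rewrite acosh_double ?ler_acosh ?real_normK ?num_real //; last exact: ltW.
by rewrite -real_normK ?num_real //; have := ltW a1; nra.
Qed.

End Acosh.

Section Clifford.
Variables (R : realType) (n : nat).
Implicit Types (M N K L : {set 'I_n.+1}) (s t u x y : cl R n).

Local Notation "s ** t" := (clmul s t) (at level 40, left associativity).
Local Notation one := (clone R n).
Local Notation set0 := finset.set0.

Lemma in_symdiff M N i : (i \in symdiff M N) = (i \in M) (+) (i \in N).
Proof. by rewrite !inE; case: (i \in M); case: (i \in N). Qed.

Lemma symdiffC M N : symdiff M N = symdiff N M.
Proof. by apply/setP => i; rewrite !in_symdiff addbC. Qed.

Lemma symdiffK M N : symdiff M (symdiff M N) = N.
Proof. by apply/setP => i; rewrite !in_symdiff addKb. Qed.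

Lemma symdiffKr M N : symdiff (symdiff N M) M = N.
Proof. by apply/setP => i; rewrite !in_symdiff addbK. Qed.

Lemma symdiff0 M : symdiff M set0 = M.
Proof. by apply/setP => i; rewrite !in_symdiff inE addbF. Qed.

Lemma symdiffv M : symdiff M M = set0.
Proof. by apply/setP => i; rewrite !in_symdiff inE addbb. Qed.

Definition inversion M N (p : 'I_n.+1 * 'I_n.+1) : bool :=
  (p.1 \in M) && (p.2 \in N) && (val p.2 < val p.1)%N.

Lemma sign_card (P : pred ('I_n.+1 * 'I_n.+1)) :
  (-1) ^+ #|[set p | P p]| = \prod_p (-1) ^+ P p :> R.
Proof.
rewrite -sum1_card big_mkcond -prodrXr.
by apply: eq_bigr => p _; rewrite inE; case: (P p).
Qed.

Lemma blade_signE M N : blade_sign R M N =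
  \prod_p (-1) ^+ inversion M N p * \prod_i qdiag R i ^+ ((i \in M) && (i \in N)).
Proof.
rewrite /blade_sign (sign_card (inversion M N)); congr (_ * _).
by rewrite big_mkcond; apply: eq_bigr => i _; rewrite inE; case: (_ && _).
Qed.

Definition rsign M : R := (-1) ^+ ((#|M| * (#|M|).-1) %/ 2).

Lemma rsignE M : rsign M = \prod_p (-1) ^+ inversion M M p.
Proof. by rewrite /rsign -card_decreasing_pairs (sign_card (inversion M M)). Qed.

Lemma blade_sign_cocycle M N L :
  blade_sign R M N * blade_sign R (symdiff M N) L =
  blade_sign R N L * blade_sign R M (symdiff N L).
Proof.
rewrite !blade_signE mulrACA [RHS]mulrACA -!big_split /=; congr (_ * _).
  apply: eq_bigr => p _; rewrite -!signr_addb /inversion !in_symdiff.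
  by case: (p.1 \in M) (p.1 \in N) (p.1 \in L) (p.2 \in M) (p.2 \in N) (p.2 \in L)
    (val p.2 < val p.1)%N => [] [] [] [] [] [] [].
apply: eq_bigr => i _; rewrite -!exprD !in_symdiff.
by case: (i \in M) (i \in N) (i \in L) => [] [] [].
Qed.

Lemma blade_sign_swap M N :
  rsign (symdiff M N) * blade_sign R M N = rsign M * rsign N * blade_sign R N M.
Proof.
rewrite !rsignE !blade_signE !mulrA -!big_split /=; congr (_ * _).
  apply: eq_bigr => p _; rewrite -!signr_addb /inversion !in_symdiff.
  by case: (p.1 \in M) (p.1 \in N) (p.2 \in M) (p.2 \in N) (val p.2 < val p.1)%N
    => [] [] [] [] [].
by apply: eq_bigr => i _; rewrite andbC.
Qed.

Lemma clmulE s t K :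
  (s ** t) K = \sum_M s M * t (symdiff M K) * blade_sign R M (symdiff M K).
Proof.
rewrite ffunE; apply: eq_bigr => M _; rewrite (big_pred1 (symdiff M K)) // => N /=.
by apply/eqP/eqP => [<-|->]; rewrite symdiffK.
Qed.

Lemma clmulEr s t K :
  (s ** t) K = \sum_N s (symdiff N K) * t N * blade_sign R (symdiff N K) N.
Proof.
rewrite clmulE (reindex_inj (h := fun N => symdiff N K)) /=; last first.
  exact: (can_inj (g := fun N => symdiff N K) (symdiffKr K)).
by apply: eq_bigr => N _; rewrite symdiffKr.
Qed.

Lemma clmulA s t u : s ** t ** u = s ** (t ** u).
Proof.
apply/ffunP => K; rewrite clmulE [RHS]clmulE.
under eq_bigr do rewrite clmulE !mulr_suml.
rewrite exchange_big /=; apply: eq_bigr => M _.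
rewrite clmulE mulr_sumr mulr_suml (reindex_inj (h := symdiff M)) /=; last first.
  exact: (can_inj (g := symdiff M) (symdiffK M)).
apply: eq_bigr => N _; rewrite symdiffK.
set L := symdiff (symdiff M N) K.
have -> : symdiff N (symdiff M K) = L.
  by apply/setP => i; rewrite !in_symdiff addbCA addbA.
have := blade_sign_cocycle M N L.
have -> : symdiff N L = symdiff M K.
  apply/setP => i; rewrite !in_symdiff.
  by case: (i \in M) (i \in N) (i \in K) => [] [] [].
move=> cocycle.
transitivity (s M * t N * u L * (blade_sign R M N * blade_sign R (symdiff M N) L)).
  by ring.
by rewrite cocycle; ring.
Qed.

Definition clscale (a : R) s : cl R n := [ffun K => a * s K].
Local Notation "a *c s" := (clscale a s) (at level 40).

Lemma clmulDl s t u : (s + t) ** u = s ** u + t ** u.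
Proof.
apply/ffunP => K; rewrite [RHS]ffunE !clmulE -big_split /=.
by apply: eq_bigr => M _; rewrite ffunE; ring.
Qed.

Lemma clmulDr s t u : s ** (t + u) = s ** t + s ** u.
Proof.
apply/ffunP => K; rewrite [RHS]ffunE !clmulE -big_split /=.
by apply: eq_bigr => M _; rewrite ffunE; ring.
Qed.

Lemma clmulZl a s t : (a *c s) ** t = a *c (s ** t).
Proof.
apply/ffunP => K; rewrite [RHS]ffunE !clmulE mulr_sumr.
by apply: eq_bigr => M _; rewrite ffunE !mulrA.
Qed.

Lemma clmulZr a s t : s ** (a *c t) = a *c (s ** t).
Proof.
apply/ffunP => K; rewrite [RHS]ffunE !clmulE mulr_sumr.
by apply: eq_bigr => M _; rewrite ffunE; ring.
Qed.

Definition blade M : cl R n := [ffun K => if K == M then 1 else 0].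

Lemma clmul_bladel M t K :
  (blade M ** t) K = t (symdiff M K) * blade_sign R M (symdiff M K).
Proof.
rewrite clmulE (bigD1 M) //= big1 => [|N /negbTE NM]; last first.
  by rewrite ffunE NM !mul0r.
by rewrite ffunE eqxx mul1r addr0.
Qed.

Lemma clmul_blader M s K :
  (s ** blade M) K = s (symdiff M K) * blade_sign R (symdiff M K) M.
Proof.
rewrite clmulEr (bigD1 M) //= big1 => [|N /negbTE NM]; last first.
  by rewrite ffunE NM mulr0 mul0r.
by rewrite ffunE eqxx mulr1 addr0.
Qed.

Lemma blade_sign0l M : blade_sign R set0 M = 1.
Proof. by rewrite blade_signE !big1 ?mulr1 // => [p|i] _; rewrite /inversion inE. Qed.

Lemma blade_sign0r M : blade_sign R M set0 = 1.
Proof.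
by rewrite blade_signE !big1 ?mulr1 // => [p|i] _; rewrite /inversion inE ?andbF.
Qed.

Lemma clmul1l s : one ** s = s.
Proof.
by apply/ffunP => K; rewrite (clmul_bladel set0) symdiffC symdiff0 blade_sign0l mulr1.
Qed.

Lemma clmul1r s : s ** one = s.
Proof.
by apply/ffunP => K; rewrite (clmul_blader set0) symdiffC symdiff0 blade_sign0r mulr1.
Qed.

Lemma realpartE s t : realpart (s ** t) = \sum_M s M * t M * blade_sign R M M.
Proof. by rewrite /realpart clmulE; apply: eq_bigr => M _; rewrite symdiff0. Qed.

Lemma realpartC s t : realpart (s ** t) = realpart (t ** s).
Proof. by rewrite !realpartE; apply: eq_bigr => M _; rewrite (mulrC (s M)). Qed.

Lemma realpartD s t : realpart (s + t) = realpart s + realpart t.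
Proof. by rewrite /realpart ffunE. Qed.

Lemma realpartZ a s : realpart (a *c s) = a * realpart s.
Proof. by rewrite /realpart ffunE. Qed.

Lemma realpart1 : realpart one = 1.
Proof. by rewrite /realpart ffunE eqxx. Qed.

Lemma clstarE s M : clstar s M = rsign M * s M.
Proof. by rewrite ffunE. Qed.

Lemma clstarM s t : clstar (s ** t) = clstar t ** clstar s.
Proof.
apply/ffunP => K; rewrite clstarE clmulE clmulEr mulr_sumr.
apply: eq_bigr => M _; rewrite !clstarE.
have := blade_sign_swap M (symdiff M K); rewrite symdiffK => swap.
transitivity (s M * t (symdiff M K) * (rsign K * blade_sign R M (symdiff M K))).
  by ring.
by rewrite swap; ring.
Qed.

Lemma clstarK s : clstar (clstar s) = s.
Proof. by apply/ffunP => K; rewrite !clstarE mulrA -expr2 sqrr_sign mul1r. Qed.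

Lemma clstarD s t : clstar (s + t) = clstar s + clstar t.
Proof. by apply/ffunP => K; rewrite !ffunE mulrDr. Qed.

Lemma clstar1 : clstar one = one.
Proof.
by apply/ffunP => K; rewrite !ffunE; case: eqP => [->|]; rewrite ?cards0 ?mulr0 ?mulr1.
Qed.

Lemma clstar_vec x : is_vec x -> clstar x = x.
Proof.
move=> x_vec; apply/ffunP => K; rewrite clstarE.
by have [K1|/x_vec ->] := eqVneq #|K| 1%N; rewrite ?mulr0 // /rsign K1 mul1r.
Qed.

Lemma sum_vec (F : {set 'I_n.+1} -> R) :
  (forall M, #|M| != 1%N -> F M = 0) -> \sum_M F M = \sum_i F [set i].
Proof.
move=> F0; rewrite (bigID (fun M => #|M| == 1%N)) /= [X in _ + X]big1 ?addr0; last first.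
  by move=> M /F0.
rewrite -(big_imset _ (in2W set1_inj)) /=; apply: eq_bigl => M.
by apply/cards1P/imsetP => [[i ->]|[i _ ->]]; exists i.
Qed.

Lemma blade_sign_set1 (i j : 'I_n.+1) : blade_sign R [set i] [set j] =
  (-1) ^+ (val j < val i)%N * (if i == j then qdiag R i else 1).
Proof.
rewrite blade_signE; congr (_ * _).
  rewrite (bigD1 (i, j)) //= big1 ?mulr1 => [|[a b]].
    by rewrite /inversion !inE !eqxx.
  by rewrite xpair_eqE /inversion !inE /= => /negbTE ->.
have [<-|ij] := eqVneq i j.
  rewrite (bigD1 i) //= big1 ?mulr1 => [|k /negbTE ki]; first by rewrite !inE eqxx.
  by rewrite !inE ki.
by rewrite big1 // => k _; rewrite !inE; have [->|] := eqVneq k i; rewrite ?(negbTE ij).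
Qed.

Lemma clmul_vec_anticomm x y : is_vec x -> is_vec y ->
  x ** y + y ** x = (2 * Phi x y) *c one.
Proof.
move=> x_vec y_vec; apply/ffunP => K; rewrite [LHS]ffunE [RHS]ffunE clmulE clmulEr.
rewrite sum_vec => [|M /x_vec ->]; last by rewrite !mul0r.
rewrite [X in _ + X]sum_vec => [|M /x_vec ->]; last by rewrite mulr0 mul0r.
rewrite -big_split /=; have [->|K0] := eqVneq K set0.
  rewrite ffunE eqxx mulr1 /Phi mulr_sumr; apply: eq_bigr => i _.
  by rewrite !symdiff0 blade_sign_set1 eqxx ltnn; ring.
rewrite ffunE (negbTE K0) mulr0 big1 // => i _.
have [/cards1P [j iKj]|/y_vec ->] := boolP (#|symdiff [set i] K| == 1%N); last by ring.
have ij : val i != val j.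
  apply: contra K0 => /eqP/val_inj ij.
  by rewrite -(symdiffK [set i] K) iKj ij symdiffv.
rewrite iKj !blade_sign_set1 -!(inj_eq val_inj) (negbTE ij) eq_sym (negbTE ij) !mulr1.
by move: ij; case: ltngtP => //= _ _; ring.
Qed.

Lemma realpart_vec x y : is_vec x -> is_vec y -> realpart (x ** y) = Phi x y.
Proof.
move=> x_vec y_vec; have := congr1 (@realpart R n) (clmul_vec_anticomm x_vec y_vec).
by rewrite realpartD realpartZ realpart1 (realpartC y) mulr1; lra.
Qed.

Lemma clmul_vec_sq x : is_vec x -> x ** x = Phi x x *c one.
Proof.
move=> x_vec; apply/ffunP => K; move/ffunP/(_ K): (clmul_vec_anticomm x_vec x_vec).
by rewrite !ffunE; lra.
Qed.

Lemma clscale1 s : 1 *c s = s.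
Proof. by apply/ffunP => K; rewrite ffunE mul1r. Qed.

Definition blade_norm M : R := \prod_(i in M) qdiag R i.

Lemma blade_norm_sq M : blade_norm M * blade_norm M = 1.
Proof.
by rewrite -big_split big1 // => i _ /=; rewrite /qdiag; case: ifP; rewrite ?mulrNN mulr1.
Qed.

Lemma rsign_blade_sign M : rsign M * blade_sign R M M = blade_norm M.
Proof.
rewrite rsignE blade_signE mulrA -big_split big1 /= => [|p _]; last first.
  by rewrite -signr_addb addbb.
by rewrite mul1r [RHS]big_mkcond; apply: eq_bigr => i _; rewrite andbb; case: (i \in M).
Qed.

Lemma realpart_mul_clstar s t :
  realpart (s ** clstar t) = \sum_M blade_norm M * s M * t M.
Proof.
rewrite realpartE; apply: eq_bigr => M _.
by rewrite clstarE -rsign_blade_sign; ring.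
Qed.

Local Notation e0 := (blade [set ord0]).

Lemma blade_sign_e0l M : blade_sign R [set ord0] M = 1.
Proof.
rewrite blade_signE !big1 ?mulr1 // => [i|p] _; last first.
  by rewrite /inversion !inE; case: eqP => //= ->; rewrite ltn0 andbF.
by rewrite inE; case: eqP => [->|]; rewrite ?expr1n.
Qed.

Lemma blade_sign_e0r M : blade_sign R M [set ord0] = blade_norm M.
Proof.
have row a : \prod_b (-1) ^+ inversion M [set ord0] (a, b) =
              (-1) ^+ ((a \in M) && (0 < val a)%N) :> R.
  rewrite (bigD1 ord0) //= big1 ?mulr1 => [|b /negbTE b0].
    by rewrite /inversion !inE eqxx /= andbT.
  by rewrite /inversion !inE b0 andbF.
rewrite blade_signE.
have -> : \prod_p (-1) ^+ inversion M [set ord0] p =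
          \prod_a \prod_b ((-1) ^+ inversion M [set ord0] (a, b) : R).
  by rewrite pair_bigA; apply: eq_bigr => -[].
under eq_bigr do rewrite row.
rewrite /blade_norm [RHS]big_mkcond -big_split; apply: eq_bigr => a _ /=.
rewrite inE; case: (a \in M); last by rewrite mulr1.
by rewrite /qdiag -(inj_eq val_inj) lt0n /=; case: eqP; rewrite ?mulr1 ?mul1r.
Qed.

Lemma e0_conj t : e0 ** t ** e0 = [ffun M => blade_norm M * t M].
Proof.
apply/ffunP => M; rewrite clmulA clmul_bladel blade_sign_e0l mulr1.
by rewrite clmul_blader symdiffK blade_sign_e0r ffunE mulrC.
Qed.

Lemma blade_norm_bounds M : -1 <= blade_norm M <= 1.
Proof. by have sq := blade_norm_sq M; apply/andP; split; nra. Qed.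

Lemma realpart_clstar_bounds t :
  realpart (t ** clstar t) <= realpart (e0 ** t ** e0 ** clstar t) /\
  2 * realpart t ^+ 2 <= realpart (t ** clstar t) + realpart (e0 ** t ** e0 ** clstar t).
Proof.
have -> : realpart (e0 ** t ** e0 ** clstar t) = \sum_M t M ^+ 2.
  rewrite realpart_mul_clstar e0_conj; apply: eq_bigr => M _.
  by rewrite ffunE mulrA blade_norm_sq mul1r expr2.
have -> : realpart (t ** clstar t) = \sum_M blade_norm M * t M ^+ 2.
  by rewrite realpart_mul_clstar; apply: eq_bigr => M _; rewrite expr2 mulrA.
split.
  apply: ler_sum => M _; have /andP[_ le1] := blade_norm_bounds M.
  by have := sqr_ge0 (t M); nra.
have norm0 : blade_norm set0 = 1 by rewrite /blade_norm big_set0.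
rewrite -big_split (bigD1 set0) //= norm0 /realpart.
have : 0 <= \sum_(M | M != set0) (blade_norm M * t M ^+ 2 + t M ^+ 2).
  apply: sumr_ge0 => M _; have /andP[ge1 _] := blade_norm_bounds M.
  by have := sqr_ge0 (t M); nra.
lra.
Qed.

Lemma blade_vec i : is_vec (blade [set i]).
Proof. by move=> M; rewrite ffunE; have [->|] := eqVneq M [set i]; rewrite ?cards1. Qed.

Lemma Phi_e0r x : Phi x e0 = x [set ord0].
Proof.
rewrite /Phi (bigD1 ord0) //= big1 => [|i /negbTE i0]; last first.
  by rewrite ffunE (inj_eq set1_inj) i0 mulr0.
by rewrite ffunE eqxx /qdiag /= mul1r mulr1 addr0.
Qed.

Lemma hyp_e0 : hyp e0.
Proof. by split; [exact: blade_vec | rewrite Phi_e0r ffunE eqxx ltr01]. Qed.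

(* [g = 1 + x e0 = (x + e0) e0] is a product of two vectors, so conjugating by it
   composes two reflections; it moves [e0] to [x] up to the scalar
   [c = Q~(x + e0) = 2 + 2 x_0]. *)
Lemma hyp_conj_e0 x : hyp x -> exists2 c, 0 < c & exists g,
  [/\ g ** clstar g = c *c one, clstar g ** g = c *c one & g ** e0 ** clstar g = c *c x].
Proof.
move=> [x_vec [xx x0]]; have e0_vec := blade_vec ord0.
have e0e0 : e0 ** e0 = one by rewrite clmul_vec_sq // Phi_e0r ffunE eqxx clscale1.
have x2 : x ** x = one by rewrite clmul_vec_sq // xx clscale1.
have anti := clmul_vec_anticomm x_vec e0_vec; rewrite Phi_e0r in anti.
have anti_x : x ** e0 ** x + e0 = (2 * x [set ord0]) *c x.
  by rewrite -{2}[e0]clmul1r -x2 -clmulA -clmulDl anti clmulZl clmul1l.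
exists (2 + 2 * x [set ord0]); first lra.
exists (one + x ** e0).
rewrite clstarD clstar1 clstarM (clstar_vec x_vec) (clstar_vec e0_vec).
rewrite !clmulDl !clmulDr !clmul1l !clmul1r -!clmulA (clmulA x e0 e0) (clmulA e0 x x).
rewrite e0e0 x2 !clmul1r ?e0e0 ?x2 ?clmul1l.
split; apply/ffunP => K.
- by move/ffunP/(_ K): anti; rewrite !ffunE; lra.
- by move/ffunP/(_ K): anti; rewrite !ffunE; lra.
- by move/ffunP/(_ K): anti_x; rewrite !ffunE; lra.
Qed.

Lemma Phi_phi_s_bounds r x : is_spin r -> hyp x ->
  1 <= Phi x (phi_s r x) /\ 2 * realpart r ^+ 2 - 1 <= Phi x (phi_s r x).
Proof.
move=> [_ r_vec rr] x_hyp; have [x_vec _] := x_hyp.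
have [c c0 [g [gg gg' gx]]] := hyp_conj_e0 x_hyp.
have ggZ u : g ** (clstar g ** u) = c *c u by rewrite -clmulA gg clmulZl clmul1l.
set t := clstar g ** r ** g.
have t_Phi : realpart (e0 ** t ** e0 ** clstar t) = c * c * Phi x (phi_s r x).
  rewrite -realpart_vec //; last exact: r_vec.
  rewrite /phi_s -mulrA -!realpartZ.
  rewrite -clmulZl -clmulZr -clmulZl -clmulZr -gx /t !clstarM clstarK.
  by rewrite !clmulA (realpartC g) !clmulA.
have t_norm : realpart (t ** clstar t) = c * c.
  rewrite /t !clstarM clstarK !clmulA ggZ !clmulZr -(clmulA r) rr clmul1l gg'.
  by rewrite !realpartZ realpart1 mulr1.
have t_real : realpart t = c * realpart r by rewrite /t realpartC ggZ realpartZ.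
have [le1 le2] := realpart_clstar_bounds t.
rewrite t_Phi t_norm t_real in le1 le2.
have cc : 0 < c * c by apply: mulr_gt0.
by split; nra.
Qed.

Lemma hdist_phi_s_ge r x : is_spin r -> hyp x ->
  2 * acosh `|realpart r| <= hdist x (phi_s r x).
Proof.
by move=> r_spin x_hyp; have [] := Phi_phi_s_bounds r_spin x_hyp; exact: acosh_double_le.
Qed.

End Clifford.

Theorem proposition3p1 (R : realType) (n : nat) (r : cl R n) :
  is_spin r -> loxodromic r ->
  transl_length r >= 2 * acosh `|realpart r|.
Proof.
move=> r_spin _; apply: lb_le_inf => [|_ [x x_hyp <-]]; last exact: hdist_phi_s_ge.
by have := hyp_e0 R n; eexists; exists (blade R [set ord0]).
Qed.
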